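(* For every $J\in\mathbb{Z}^r$ and every $\delta\in C_J$, the set $S_{\delta,J}$ has at most $n-1$ elements.
   Context: $B_n$ is the braid group with Artin generators $\sigma_1,\ldots,\sigma_{n-1}$, $B_n^+$ the positive braid monoid, $\Delta$ the Garside element (half twist). For $a,b\in B_n^+$, $a\prec b$ means $ac=b$ for some $c\in B_n^+$. Simple elements are the $s\in B_n^+$ with $s\prec\Delta$. For $a\in B_n$, $\inf(a)$ is the largest $k\in\mathbb{Z}$ with $a=\Delta^kp$, $p\in B_n^+$. For $J=(j_1,\ldots,j_r)\in\mathbb{Z}^r$, $C_J$ is the set of $(d_1,\ldots,d_r)\in(B_n)^r$ with $\inf(d_i)\ge j_i$ for all $i$. For $\delta\in C_J$, $S_{\delta,J}$ is the set of $\prec$-minimal elements of the set of simple elements $s$ with $s^{-1}\delta s\in C_J$ (componentwise conjugation). *)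

(* The braid group B_n is presented concretely by words in the
   Artin generators and their inverses, modulo the congruence generated by
   free cancellation and the braid relations (the standard presentation). *)
From mathcomp Require Import all_boot all_order all_algebra.
Set Implicit Arguments. Unset Strict Implicit. Unset Printing Implicit Defensive.
Import Order.TTheory GRing.Theory Num.Theory.

(* A letter (i, true) is sigma_{i+1}, (i, false) is sigma_{i+1}^{-1};
   i ranges over 'I_(n-1), i.e. generators sigma_1 .. sigma_{n-1}. *)
Definition letter (n : nat) := ('I_n.-1 * bool)%type.
Definition word (n : nat) := seq (letter n).

Inductive brel (n : nat) : word n -> word n -> Prop :=
| brel_free (i : 'I_n.-1) (e : bool) : brel [:: (i, e); (i, ~~ e)] [::]
| brel_comm (i j : 'I_n.-1) : (i.+1 < j)%N ->
    brel [:: (i, true); (j, true)] [:: (j, true); (i, true)]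
| brel_braid (i j : 'I_n.-1) : (i.+1 = j :> nat) ->
    brel [:: (i, true); (j, true); (i, true)] [:: (j, true); (i, true); (j, true)].

Inductive breq (n : nat) : word n -> word n -> Prop :=
| breq_refl u : breq u u
| breq_sym u v : breq u v -> breq v u
| breq_trans u v w : breq u v -> breq v w -> breq u w
| breq_ctx (a b u v : word n) : brel u v -> breq (a ++ u ++ b) (a ++ v ++ b).

Definition winv n (w : word n) : word n := rev [seq (x.1, ~~ x.2) | x <- w].

Definition is_pos n (w : word n) : Prop :=
  exists p : word n, all (fun x => x.2) p /\ breq w p.

(* Garside element Delta = sigma_1 (sigma_2 sigma_1) ... (sigma_{n-1} ... sigma_1). *)
Definition Delta (n : nat) : word n :=
  [seq (i, true) | i <- pmap (@insub nat (fun k => k < n.-1)%N 'I_n.-1)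
                         (flatten [seq rev (iota 0 k.+1) | k <- iota 0 n.-1])].

Definition wpowz n (w : word n) (k : int) : word n :=
  match k with
  | Posz m => flatten (nseq m w)
  | Negz m => flatten (nseq m.+1 (winv w))
  end.

Definition prec n (a b : word n) : Prop :=
  is_pos a /\ is_pos b /\ exists c, is_pos c /\ breq (a ++ c) b.

Definition simple n (s : word n) : Prop := is_pos s /\ prec s (Delta n).

(* inf(a) >= j, where inf(a) is the largest k with a = Delta^k p, p in B_n^+ :
   some such k is >= j. *)
Definition inf_ge n (j : int) (a : word n) : Prop :=
  exists k : int, (j <= k)%R /\ exists p, is_pos p /\ breq a (wpowz (Delta n) k ++ p).

Definition inC n r (J : 'I_r -> int) (d : 'I_r -> word n) : Prop :=
  forall i, inf_ge (J i) (d i).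

Definition conjw n (s d : word n) : word n := winv s ++ d ++ s.

Definition candS n r (J : 'I_r -> int) (d : 'I_r -> word n) (s : word n) : Prop :=
  simple s /\ ~ breq s [::] /\ inC J (fun i => conjw s (d i)).

Definition inS n r (J : 'I_r -> int) (d : 'I_r -> word n) (s : word n) : Prop :=
  candS J d s /\ forall t, candS J d t -> prec t s -> breq t s.

(* Send each s in S_{delta,J} to a generator sigma_i with sigma_i <= s.  Two
   elements s, s' of S_{delta,J} sent to the same sigma_i coincide: their gcd g is
   divisible by sigma_i, hence nontrivial, and it is simple.  Conjugating by g also
   keeps delta in C_J: reading inf(x) >= j as Delta^-j x in B_n^+, the condition on
   s says phi(s) <= p s, where phi is conjugation by Delta^-j (an automorphism of
   the prefix order) and p = Delta^-j delta_k, and this condition passes to gcds.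
   By minimality s = g = s', so s |-> i is injective into {1, ..., n-1}.

   The Garside theory this needs (cancellation and gcds in B_n^+, and injectivity
   of B_n^+ -> B_n) is derived from the presentation: cancellation from Garside's
   reversing lemma (a X = b Y in B_n^+ forces X = c_ab Z and Y = c_ba Z, where
   a c_ab = b c_ba is the lcm of a and b), and injectivity by rewriting every word,
   letter by letter, into the form Delta^-k p with p positive. *)

From mathcomp Require Import all_boot all_order all_algebra.
From mathcomp Require Import zify.
From Stdlib Require Import Classical_Prop IndefiniteDescription.
Set Implicit Arguments. Unset Strict Implicit. Unset Printing Implicit Defensive.
Import GRing.Theory.

(** * The positive braid monoid *)

Inductive pbrel : seq nat -> seq nat -> Prop :=
| pbrel_comm a b : (a.+1 < b)%N -> pbrel [:: a; b] [:: b; a]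
| pbrel_braid a : pbrel [:: a; a.+1; a] [:: a.+1; a; a.+1].

Inductive pbeq : seq nat -> seq nat -> Prop :=
| pbeq_refl u : pbeq u u
| pbeq_sym u v : pbeq u v -> pbeq v u
| pbeq_trans u v w : pbeq u v -> pbeq v w -> pbeq u w
| pbeq_ctx a b u v : pbrel u v -> pbeq (a ++ u ++ b) (a ++ v ++ b).

Lemma pbeq_rel u v : pbrel u v -> pbeq u v.
Proof. by move=> H; have := pbeq_ctx [::] [::] H; rewrite /= !cats0. Qed.

Lemma pbeq_size u v : pbeq u v -> size u = size v.
Proof.
elim=> [u0|u0 v0 _ ->|u0 v0 w0 _ -> _ ->|a b u0 v0 H] //.
by rewrite !size_cat; case: H.
Qed.

Lemma pbeq_all (P : pred nat) u v : pbeq u v -> all P u = all P v.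
Proof.
elim=> [u0|u0 v0 _ ->|u0 v0 w0 _ -> _ ->|a b u0 v0 []] //.
- by move=> x y _; rewrite !all_cat /=; case: (P x); case: (P y).
- by move=> x; rewrite !all_cat /=; case: (P x); case: (P x.+1).
Qed.

Lemma pbeq_cat3 a b u v : pbeq u v -> pbeq (a ++ u ++ b) (a ++ v ++ b).
Proof.
elim=> [u0|u0 v0 _|u0 v0 w0 _ IH1 _ IH2|a0 b0 u0 v0 H].
- exact: pbeq_refl.
- exact: pbeq_sym.
- exact: pbeq_trans IH1 IH2.
- have := pbeq_ctx (a ++ a0) (b0 ++ b) H.
  by rewrite !catA -!(catA _ _ b0) -!(catA _ _ b).
Qed.

Lemma pbeq_catl a u v : pbeq u v -> pbeq (a ++ u) (a ++ v).
Proof. by move=> H; have := pbeq_cat3 a [::] H; rewrite !cats0. Qed.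

Lemma pbeq_catr b u v : pbeq u v -> pbeq (u ++ b) (v ++ b).
Proof. exact: (@pbeq_cat3 [::] b u v). Qed.

Lemma pbeq_cons x u v : pbeq u v -> pbeq (x :: u) (x :: v).
Proof. exact: (@pbeq_catl [:: x] u v). Qed.

Lemma pbeq_rev u v : pbeq u v -> pbeq (rev u) (rev v).
Proof.
elim=> [u0|u0 v0 _|u0 v0 w0 _ IH1 _ IH2|a b u0 v0 H].
- exact: pbeq_refl.
- exact: pbeq_sym.
- exact: pbeq_trans IH1 IH2.
- rewrite !rev_cat; apply: pbeq_catr; apply: pbeq_catl.
  case: H => [x y Hxy|x].
  + exact: pbeq_sym (pbeq_rel (pbrel_comm Hxy)).
  + exact: pbeq_rel (pbrel_braid x).
Qed.

Definition adj (a b : nat) := (a.+1 == b) || (b.+1 == a).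
Definition far (a b : nat) := (a.+1 < b)%N || (b.+1 < a)%N.

Lemma far_sym a b : far a b = far b a.
Proof. by rewrite /far orbC. Qed.

Lemma adj_sym a b : adj a b = adj b a.
Proof. by rewrite /adj orbC. Qed.

Lemma pbeq_swap a b T : far a b -> pbeq [:: a, b & T] [:: b, a & T].
Proof.
case/orP=> H; first exact: (pbeq_ctx [::] T (pbrel_comm H)).
exact: pbeq_sym (pbeq_ctx [::] T (pbrel_comm H)).
Qed.

Lemma pbeq_braid a b T : adj a b -> pbeq [:: a, b, a & T] [:: b, a, b & T].
Proof.
case/orP=> /eqP <-; first exact: (pbeq_ctx [::] T (pbrel_braid a)).
exact: pbeq_sym (pbeq_ctx [::] T (pbrel_braid b)).
Qed.

Lemma pbeq_swap_all b w T : all (far b) w -> pbeq (b :: w ++ T) (w ++ b :: T).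
Proof.
elim: w => [|x w IH] /=; first by move=> _; apply: pbeq_refl.
case/andP=> Hx Hw; apply: pbeq_trans (pbeq_swap _ Hx) _.
exact: pbeq_cons (IH Hw).
Qed.

Lemma pbeq_swap_allr x w : all (far x) w -> pbeq (w ++ [:: x]) (x :: w).
Proof. by move=> H; apply: pbeq_sym; have := pbeq_swap_all [::] H; rewrite cats0. Qed.

(** * Garside's reversing lemma *)

Definition rcompl (a b : nat) : seq nat :=
  if a == b then [::] else if adj a b then [:: b; a] else [:: b].

Definition lcm_tails a X b Y :=
  exists Z, pbeq X (rcompl a b ++ Z) /\ pbeq Y (rcompl b a ++ Z).

Lemma adj_neq a b : adj a b -> a <> b.
Proof. rewrite /adj; lia. Qed.

Lemma far_neq a b : far a b -> a <> b.
Proof. rewrite /far; lia. Qed.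

Lemma far_nadj a b : far a b -> ~~ adj a b.
Proof. rewrite /far /adj; lia. Qed.

Lemma rcompl_adj a b : adj a b -> rcompl a b = [:: b; a].
Proof. by move=> H; rewrite /rcompl H; case: eqP => // /adj_neq. Qed.

Lemma rcompl_far a b : far a b -> rcompl a b = [:: b].
Proof. by move=> H; rewrite /rcompl (negbTE (far_nadj H)); case: eqP => // /far_neq. Qed.

Lemma eq_adj_far a b : [\/ a = b, adj a b | far a b].
Proof.
have [->|ne] := eqVneq a b; first exact: Or31.
by case Hab: (adj a b); [apply: Or32 | apply: Or33; move: ne Hab; rewrite /far /adj; lia].
Qed.

Lemma rcompl_lcm a b : pbeq (a :: rcompl a b) (b :: rcompl b a).
Proof.
case: (eq_adj_far a b) => [->|H|H]; first exact: pbeq_refl.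
- by rewrite rcompl_adj // rcompl_adj 1?adj_sym //; apply: pbeq_braid.
- by rewrite rcompl_far // rcompl_far 1?far_sym //; apply: pbeq_swap.
Qed.

Lemma lcm_tails_sym a X b Y : lcm_tails a X b Y -> lcm_tails b Y a X.
Proof. by case=> Z [H1 H2]; exists Z. Qed.

Lemma lcm_tails_eq a X Y : pbeq X Y -> lcm_tails a X a Y.
Proof. by move=> H; exists Y; rewrite /rcompl eqxx; split=> //; apply: pbeq_refl. Qed.

Lemma lcm_tails_adj a b X Y Z : adj a b ->
  pbeq X [:: b, a & Z] -> pbeq Y [:: a, b & Z] -> lcm_tails a X b Y.
Proof. by move=> H H1 H2; exists Z; rewrite rcompl_adj // rcompl_adj 1?adj_sym. Qed.

Lemma lcm_tails_far a b X Y Z : far a b ->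
  pbeq X (b :: Z) -> pbeq Y (a :: Z) -> lcm_tails a X b Y.
Proof. by move=> H H1 H2; exists Z; rewrite rcompl_far // rcompl_far 1?far_sym. Qed.

Lemma lcm_tailsP a X b Y : lcm_tails a X b Y ->
  [\/ a = b /\ pbeq X Y,
      adj a b /\ exists Z, pbeq X [:: b, a & Z] /\ pbeq Y [:: a, b & Z]
    | far a b /\ exists Z, pbeq X (b :: Z) /\ pbeq Y (a :: Z)].
Proof.
case=> Z [H1 H2]; case: (eq_adj_far a b) => [E|H|H].
- subst b; apply: Or31; split=> //; rewrite /rcompl eqxx in H1 H2.
  exact: pbeq_trans H1 (pbeq_sym H2).
- rewrite rcompl_adj // in H1; rewrite rcompl_adj 1?adj_sym // in H2.
  by apply: Or32; split=> //; exists Z.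
- rewrite rcompl_far // in H1; rewrite rcompl_far 1?far_sym // in H2.
  by apply: Or33; split=> //; exists Z.
Qed.

Lemma all_far_rcompl b a c : far b a -> far b c -> all (far b) (rcompl a c).
Proof. by move=> H1 H2; rewrite /rcompl; case: ifP => _ //; case: ifP => _ /=; rewrite ?H1 ?H2. Qed.

Section BraidIdentities.
Variables (a b c : nat) (T : seq nat).

Lemma pbeq_bcabc_cabca : far a b -> adj a c -> adj b c ->
  pbeq [:: b, c, a, b, c & T] [:: c, a, b, c, a & T].
Proof.
move=> Hab Hac Hbc; have Hba : far b a by rewrite far_sym.
have Hca : adj c a by rewrite adj_sym.
apply: pbeq_trans (pbeq_cons b (pbeq_cons c (pbeq_swap (c :: T) Hab))) _.
apply: pbeq_trans (pbeq_braid (a :: c :: T) Hbc) _.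
apply: pbeq_trans (pbeq_cons c (pbeq_cons b (pbeq_braid T Hca))) _.
exact: (pbeq_cons c (pbeq_swap _ Hba)).
Qed.

Lemma pbeq_bcacb_acbca : far a b -> adj a c -> adj b c ->
  pbeq [:: b, c, a, c, b & T] [:: a, c, b, c, a & T].
Proof.
move=> Hab Hac Hbc; have Hba : far b a by rewrite far_sym.
have Hca : adj c a by rewrite adj_sym.
apply: pbeq_trans (pbeq_cons b (pbeq_braid (b :: T) Hca)) _.
apply: pbeq_trans (pbeq_swap (c :: a :: b :: T) Hba) _.
apply: pbeq_trans (pbeq_cons a (pbeq_cons b (pbeq_cons c (pbeq_swap T Hab)))) _.
exact: (pbeq_cons a (pbeq_braid (a :: T) Hbc)).
Qed.

Lemma pbeq_bacba_cbacb : far a c -> adj a b -> adj b c ->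
  pbeq [:: b, a, c, b, a & T] [:: c, b, a, c, b & T].
Proof.
move=> Hac Hab Hbc; have Hca : far c a by rewrite far_sym.
apply: pbeq_trans (pbeq_cons b (pbeq_swap (b :: a :: T) Hac)) _.
apply: pbeq_trans (pbeq_cons b (pbeq_cons c (pbeq_braid T Hab))) _.
apply: pbeq_trans (pbeq_braid (a :: b :: T) Hbc) _.
exact: (pbeq_cons c (pbeq_cons b (pbeq_swap (b :: T) Hca))).
Qed.

Lemma pbeq_bcabc_abacb : far a c -> adj a b -> adj b c ->
  pbeq [:: b, c, a, b, c & T] [:: a, b, a, c, b & T].
Proof.
move=> Hac Hab Hbc; have Hca : far c a by rewrite far_sym.
have Hba : adj b a by rewrite adj_sym.
have Hcb : adj c b by rewrite adj_sym.
apply: pbeq_trans (pbeq_cons b (pbeq_swap (b :: c :: T) Hca)) _.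
apply: pbeq_trans (pbeq_cons b (pbeq_cons a (pbeq_braid T Hcb))) _.
exact: (pbeq_braid (c :: b :: T) Hba).
Qed.

Lemma pbeq_bca_abc : far a b -> far a c -> pbeq [:: b, c, a & T] [:: a, b, c & T].
Proof.
move=> Hab Hac; have Hca : far c a by rewrite far_sym.
have Hba : far b a by rewrite far_sym.
exact: pbeq_trans (pbeq_cons b (pbeq_swap T Hca)) (pbeq_swap _ Hba).
Qed.

End BraidIdentities.

(* The reversing lemma is proved by induction on the length; the only real case is
   transitivity, i.e. Garside's cube condition, checked by cases on whether the
   initial letters a, b, c are equal, adjacent or far apart. *)
Section ReversingStep.
Variable d : nat.
Hypothesis reversing_below : forall a X b Y,
  (size X < d)%N -> pbeq (a :: X) (b :: Y) -> lcm_tails a X b Y.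

Local Ltac sizes := repeat match goal with H : pbeq _ _ |- _ => have := pbeq_size H; clear H end;
  simpl; intros; lia.

Lemma reversing_belowP a X b Y : pbeq (a :: X) (b :: Y) -> (size X < d)%N ->
  [\/ a = b /\ pbeq X Y,
      adj a b /\ exists Z, pbeq X [:: b, a & Z] /\ pbeq Y [:: a, b & Z]
    | far a b /\ exists Z, pbeq X (b :: Z) /\ pbeq Y (a :: Z)].
Proof. by move=> H1 H2; apply: lcm_tailsP; apply: reversing_below. Qed.

Lemma lcm_tails_trans_far_adjr_far a X b Y c W P Q : size X = d -> far a b -> far b c ->
  pbeq X (b :: P) -> pbeq Y (a :: P) -> pbeq Y (c :: Q) -> pbeq W (b :: Q) ->
  lcm_tails a X c W.
Proof.
move=> sX Hab Hbc HX HY1 HY2 HW.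
have [|R [H1 H2]] := reversing_below _ (pbeq_trans (pbeq_sym HY1) HY2); first by sizes.
have Hba : far b a by rewrite far_sym.
exists (b :: R); split.
- apply: pbeq_trans HX (pbeq_trans (pbeq_cons b H1) _).
  exact: pbeq_swap_all (all_far_rcompl Hba Hbc).
- apply: pbeq_trans HW (pbeq_trans (pbeq_cons b H2) _).
  exact: pbeq_swap_all (all_far_rcompl Hbc Hba).
Qed.

Lemma lcm_tails_trans_far_adj a X b Y c W P Q : size X = d -> far a b -> adj b c ->
  pbeq X (b :: P) -> pbeq Y (a :: P) -> pbeq Y [:: c, b & Q] -> pbeq W [:: b, c & Q] ->
  lcm_tails a X c W.
Proof.
move=> sX Hab Hbc HX HY1 HY2 HW.
case: (reversing_belowP (pbeq_trans (pbeq_sym HY1) HY2) ltac:(sizes))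
  => [[E _]|[Hac [R [H1 H2]]]|[Hac [R [H1 H2]]]].
- by subst c; move: Hab Hbc; rewrite /far /adj; lia.
- case: (reversing_belowP H2 ltac:(sizes)) => [[E _]|[Hba _]|[Hba [R' [H3 H4]]]].
  + by subst b; move: Hab; rewrite /far; lia.
  + by move: Hab Hba; rewrite /far /adj; lia.
  case: (reversing_belowP H4 ltac:(sizes)) => [[E _]|[Hcb [T [H5 H6]]]|[Hcb _]].
  + by subst b; move: Hbc; rewrite /adj; lia.
  + apply: (@lcm_tails_adj _ _ _ _ [:: b, c, a & T]) => //.
    * apply: pbeq_trans HX (pbeq_trans (pbeq_cons b H1) _).
      apply: pbeq_trans (pbeq_cons b (pbeq_cons c (pbeq_cons a H5))) _.
      exact: pbeq_bcabc_cabca.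
    * apply: pbeq_trans HW (pbeq_trans (pbeq_cons b (pbeq_cons c H3)) _).
      apply: pbeq_trans (pbeq_cons b (pbeq_cons c (pbeq_cons a H6))) _.
      exact: pbeq_bcacb_acbca.
  + by move: Hbc Hcb; rewrite /far /adj; lia.
- case: (reversing_belowP H2 ltac:(sizes)) => [[E _]|[Hba _]|[Hba [R' [H3 H4]]]].
  + by subst b; move: Hab; rewrite /far; lia.
  + by move: Hab Hba; rewrite /far /adj; lia.
  apply: (@lcm_tails_far _ _ _ _ [:: b, c & R']) => //.
  + apply: pbeq_trans HX (pbeq_trans (pbeq_cons b H1) _).
    exact: pbeq_trans (pbeq_cons b (pbeq_cons c H4)) (pbeq_braid _ _).
  + apply: pbeq_trans HW (pbeq_trans (pbeq_cons b (pbeq_cons c H3)) _).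
    exact: pbeq_bca_abc.
Qed.

Lemma lcm_tails_trans_adj_adj a X b Y c W P Q : size X = d -> adj a b -> adj b c ->
  pbeq X [:: b, a & P] -> pbeq Y [:: a, b & P] -> pbeq Y [:: c, b & Q] ->
  pbeq W [:: b, c & Q] -> lcm_tails a X c W.
Proof.
move=> sX Hab Hbc HX HY1 HY2 HW.
case: (reversing_belowP (pbeq_trans (pbeq_sym HY1) HY2) ltac:(sizes))
  => [[E H]|[Hac _]|[Hac [R [H1 H2]]]].
- subst c; apply: lcm_tails_eq.
  case: (reversing_belowP H ltac:(sizes)) => [[_ H']|[/adj_neq //]|[/far_neq //]].
  apply: pbeq_trans HX (pbeq_sym (pbeq_trans HW _)).
  exact: pbeq_cons (pbeq_cons _ (pbeq_sym H')).
- by move: Hab Hbc Hac; rewrite /adj; lia.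
case: (reversing_belowP H1 ltac:(sizes)) => [[E _]|[_ [R1 [H3 H4]]]|[Hbc' _]].
- by subst b; move: Hbc; rewrite /adj; lia.
- case: (reversing_belowP (pbeq_trans H2 (pbeq_cons a H4)) ltac:(sizes))
    => [[E _]|[_ [R2 [H5 H6]]]|[Hba' _]].
  + by subst b; move: Hab; rewrite /adj; lia.
  + case: (reversing_belowP H6 ltac:(sizes)) => [[_ H]|[/adj_neq //]|[/far_neq //]].
    case: (reversing_belowP H ltac:(sizes)) => [[E _]|[Hca' _]|[Hca' [T [H7 H8]]]].
    * by subst c; move: Hac; rewrite /far; lia.
    * by move: Hac Hca'; rewrite /far /adj; lia.
    apply: (@lcm_tails_far _ _ _ _ [:: b, a, c, b & T]) => //.
    * apply: pbeq_trans HX (pbeq_trans (pbeq_cons b (pbeq_cons a H3)) _).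
      apply: pbeq_trans (pbeq_cons b (pbeq_cons a (pbeq_cons c (pbeq_cons b H7)))) _.
      exact: pbeq_bacba_cbacb.
    * apply: pbeq_trans HW (pbeq_trans (pbeq_cons b (pbeq_cons c H5)) _).
      apply: pbeq_trans (pbeq_cons b (pbeq_cons c (pbeq_cons a (pbeq_cons b H8)))) _.
      exact: pbeq_bcabc_abacb.
  + by move: Hab Hba'; rewrite /far /adj; lia.
- by move: Hbc Hbc'; rewrite /far /adj; lia.
Qed.

Lemma lcm_tails_trans a X b Y c W : size X = d ->
  lcm_tails a X b Y -> lcm_tails b Y c W -> lcm_tails a X c W.
Proof.
move=> sX H1 H2.
case/lcm_tailsP: (H1) => [[E HXY]|[Hab [P [HX HY1]]]|[Hab [P [HX HY1]]]].
  by subst b; case: H2 => Z [K1 K2]; exists Z; split=> //; apply: pbeq_trans HXY K1.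
all: case/lcm_tailsP: (H2) => [[E HYW]|[Hbc [Q [HY2 HW]]]|[Hbc [Q [HY2 HW]]]];
  first by subst c; case: H1 => Z [K1 K2]; exists Z; split=> //;
           apply: pbeq_trans (pbeq_sym HYW) K2.
- exact: lcm_tails_trans_adj_adj HX HY1 HY2 HW.
- have sW : size W = d.
    by move: (pbeq_size HX) (pbeq_size HY1) (pbeq_size HY2) (pbeq_size HW) => /=; lia.
  apply: lcm_tails_sym; apply: (lcm_tails_trans_far_adj sW _ _ HW HY2 HY1 HX).
  + by rewrite far_sym.
  + by rewrite adj_sym.
- exact: lcm_tails_trans_far_adj HX HY1 HY2 HW.
- exact: lcm_tails_trans_far_adjr_far HX HY1 HY2 HW.
Qed.

End ReversingStep.

Lemma reversing_step d :
  (forall a X b Y, (size X < d)%N -> pbeq (a :: X) (b :: Y) -> lcm_tails a X b Y) ->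
  forall a X b Y, size X = d -> pbeq (a :: X) (b :: Y) -> lcm_tails a X b Y.
Proof.
move=> IH a X b Y sX H.
suff: forall U V, pbeq U V -> size U = d.+1 ->
    forall a X b Y, U = a :: X -> V = b :: Y -> lcm_tails a X b Y.
  by move/(_ _ _ H); apply=> //=; rewrite sX.
move=> U V; elim=> {U V} [U|U V HUV IH1|U V W HUV IH1 _ IH2|l r u v Hr].
- by move=> _ a0 X0 b0 Y0 -> [-> ->]; apply/lcm_tails_eq/pbeq_refl.
- move=> sV a0 X0 b0 Y0 eU eV; apply/lcm_tails_sym/(IH1 _ _ _ _ _ eV eU).
  by rewrite -sV; apply: pbeq_size.
- move=> sU a0 X0 b0 Y0 eU eW.
  have sV : size V = d.+1 by rewrite -sU (pbeq_size HUV).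
  case: V sV HUV IH1 IH2 => // c Z sV _ IH1 IH2.
  apply: (lcm_tails_trans IH (b := c) (Y := Z)).
  + by subst; case: sU.
  + exact: IH1.
  + exact: IH2.
- move=> _ a0 X0 b0 Y0; case: l => [|x l] /=.
  + case: Hr => [x y Hxy|x] /= [<- <-] [<- <-].
    * by apply: (@lcm_tails_far _ _ _ _ r); rewrite /far ?Hxy //; apply: pbeq_refl.
    * by apply: (@lcm_tails_adj _ _ _ _ r); rewrite /adj ?eqxx //; apply: pbeq_refl.
  + by move=> [-> <-] [-> <-]; apply/lcm_tails_eq/pbeq_ctx.
Qed.

Theorem pbeq_cons_lcm_tails a X b Y : pbeq (a :: X) (b :: Y) -> lcm_tails a X b Y.
Proof.
suff: forall k d, (d < k)%N -> forall a X b Y, size X = d ->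
    pbeq (a :: X) (b :: Y) -> lcm_tails a X b Y.
  by move/(_ (size X).+1 (size X) (ltnSn _)); apply.
elim=> // k IHk d Hd; apply: reversing_step => a0 X0 b0 Y0 H0.
by apply: (IHk (size X0)) => //; lia.
Qed.

Lemma pbeq_cons_inj a X Y : pbeq (a :: X) (a :: Y) -> pbeq X Y.
Proof.
move/pbeq_cons_lcm_tails => [Z []]; rewrite /rcompl eqxx /= => H1 H2.
exact: pbeq_trans H1 (pbeq_sym H2).
Qed.

Lemma pbeq_cancell u X Y : pbeq (u ++ X) (u ++ Y) -> pbeq X Y.
Proof. by elim: u => //= a u IH /pbeq_cons_inj /IH. Qed.

Lemma pbeq_cancelr u X Y : pbeq (X ++ u) (Y ++ u) -> pbeq X Y.
Proof. by move/pbeq_rev; rewrite !rev_cat => /pbeq_cancell /pbeq_rev; rewrite !revK. Qed.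

(** * Divisibility, lcms and gcds in the monoid *)

Definition pdvd u v := exists c, pbeq (u ++ c) v.

Lemma pdvd_refl u : pdvd u u.
Proof. by exists [::]; rewrite cats0; apply: pbeq_refl. Qed.

Lemma pdvd_nil u : pdvd [::] u.
Proof. by exists u; apply: pbeq_refl. Qed.

Lemma pdvd_cat u c : pdvd u (u ++ c).
Proof. by exists c; apply: pbeq_refl. Qed.

Lemma pdvd_trans u v w : pdvd u v -> pdvd v w -> pdvd u w.
Proof.
move=> [c1 H1] [c2 H2]; exists (c1 ++ c2); rewrite catA.
exact: pbeq_trans (pbeq_catr _ H1) H2.
Qed.

Lemma pdvd_pbeql u u' v : pbeq u u' -> pdvd u v -> pdvd u' v.
Proof. by move=> H [c Hc]; exists c; apply: pbeq_trans (pbeq_catr _ (pbeq_sym H)) Hc. Qed.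

Lemma pdvd_pbeqr u v v' : pbeq v v' -> pdvd u v -> pdvd u v'.
Proof. by move=> H [c Hc]; exists c; apply: pbeq_trans Hc H. Qed.

Lemma pdvd_cat2l p x y : pdvd (p ++ x) (p ++ y) <-> pdvd x y.
Proof.
split=> [[c Hc]|[c Hc]]; exists c; last by rewrite -catA; apply: pbeq_catl.
by apply: (@pbeq_cancell p); rewrite catA.
Qed.

Definition is_plcm u v L :=
  [/\ pdvd u L, pdvd v L & forall Y, pdvd u Y -> pdvd v Y -> pdvd L Y].

Definition is_pgcd a b g :=
  [/\ pdvd g a, pdvd g b & forall u, pdvd u a -> pdvd u b -> pdvd u g].

Lemma plcm_quotient_pdvd u p L e Z :
  is_plcm u p L -> pbeq (p ++ e) L -> pdvd u (p ++ Z) -> pdvd e Z.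
Proof.
case=> _ _ HL He Hu; apply/(pdvd_cat2l p); apply: pdvd_pbeql (pbeq_sym He) _.
exact: HL Hu (pdvd_cat _ _).
Qed.

(* The grid picture of reversing: lcm(a u', b v') = a (rcompl a b) lcm(e1, e2). *)
Lemma plcm_cons a b u' v' L1 L2 e1 e2 e :
  is_plcm u' (rcompl a b) L1 -> pbeq (rcompl a b ++ e1) L1 ->
  is_plcm v' (rcompl b a) L2 -> pbeq (rcompl b a ++ e2) L2 ->
  is_plcm e1 e2 e -> is_plcm (a :: u') (b :: v') (a :: rcompl a b ++ e).
Proof.
move=> HL1 He1 HL2 He2 [He1e He2e HeU]; case: (HL1) => Hu' _ _; case: (HL2) => Hv' _ _.
split.
- apply/(pdvd_cat2l [:: a])/(pdvd_trans Hu')/(pdvd_pbeql He1).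
  exact/pdvd_cat2l.
- apply: pdvd_pbeqr (pbeq_catr e (pbeq_sym (rcompl_lcm a b))) _.
  apply/(pdvd_cat2l [:: b])/(pdvd_trans Hv')/(pdvd_pbeql He2).
  exact/pdvd_cat2l.
- move=> Y [y1 Hy1] [y2 Hy2].
  have [Z [K1 K2]] := pbeq_cons_lcm_tails (pbeq_trans Hy1 (pbeq_sym Hy2)).
  apply: pdvd_pbeqr Hy1 (pdvd_pbeqr (pbeq_cons a (pbeq_sym K1)) _).
  apply/(pdvd_cat2l (a :: rcompl a b))/HeU.
  + exact: plcm_quotient_pdvd HL1 He1 (ex_intro _ y1 K1).
  + exact: plcm_quotient_pdvd HL2 He2 (ex_intro _ y2 K2).
Qed.

Lemma plcm_exists u v W : pdvd u W -> pdvd v W -> exists L, is_plcm u v L.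
Proof.
move: {2}(size W).+1 (ltnSn (size W)) => k; elim: k u v W => // k IH.
move=> [|a u'] v W sW Hu Hv.
  by exists v; split=> //; [apply: pdvd_nil | apply: pdvd_refl].
case: v Hv => [|b v'] Hv.
  by exists (a :: u'); split=> //; [apply: pdvd_refl | apply: pdvd_nil].
case: (Hu) => c Hc; case: (Hv) => c' Hc'.
have [Z [H1 H2]] := pbeq_cons_lcm_tails (pbeq_trans Hc (pbeq_sym Hc')).
have sZ1 : (size (rcompl a b ++ Z) < k)%N.
  by move: (pbeq_size Hc) (pbeq_size H1) => /=; rewrite !size_cat; lia.
have sZ2 : (size (rcompl b a ++ Z) < k)%N.
  by move: (pbeq_size Hc') (pbeq_size H2) => /=; rewrite !size_cat; lia.
have Hu' : pdvd u' (rcompl a b ++ Z) by exists c.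
have Hv' : pdvd v' (rcompl b a ++ Z) by exists c'.
have [L1 HL1] := IH _ _ _ sZ1 Hu' (pdvd_cat _ _).
have [L2 HL2] := IH _ _ _ sZ2 Hv' (pdvd_cat _ _).
case: (HL1) => _ [e1 He1] _; case: (HL2) => _ [e2 He2] _.
have [|e He] := IH e1 e2 Z _ (plcm_quotient_pdvd HL1 He1 Hu') (plcm_quotient_pdvd HL2 He2 Hv').
  by move: sZ1; rewrite size_cat; lia.
by exists (a :: rcompl a b ++ e); apply: plcm_cons HL1 He1 HL2 He2 He.
Qed.

Lemma pgcd_exists a b : exists g, is_pgcd a b g.
Proof.
move: {2}(size a).+1 (ltnSn (size a)) => k; elim: k a b => // k IH a b sa.
case: (classic (exists x, pdvd [:: x] a /\ pdvd [:: x] b)) => [[x [[a' Ha] [b' Hb]]]|Hn].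
- have [|g' [Hga Hgb HgU]] := IH a' b'; first by move: (pbeq_size Ha) => /=; lia.
  exists (x :: g'); split.
  + exact: pdvd_pbeqr Ha (iffRL (pdvd_cat2l [:: x] _ _) Hga).
  + exact: pdvd_pbeqr Hb (iffRL (pdvd_cat2l [:: x] _ _) Hgb).
  move=> u Hu Hub; have [L [HuL [w Hw] HLU]] := plcm_exists Hu (ex_intro _ a' Ha).
  have HwL c : pdvd u (x :: c) -> pdvd w c.
    move=> Huc; apply/(pdvd_cat2l [:: x])/(pdvd_pbeql (pbeq_sym Hw)).
    exact: HLU Huc (pdvd_cat _ _).
  apply: pdvd_trans HuL (pdvd_pbeql Hw _); apply/(pdvd_cat2l [:: x]).
  apply: HgU; apply: HwL; first exact: pdvd_pbeqr (pbeq_sym Ha) Hu.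
  exact: pdvd_pbeqr (pbeq_sym Hb) Hub.
- exists [::]; split; [exact: pdvd_nil | exact: pdvd_nil |].
  move=> [|x u'] Hu Hub; first exact: pdvd_refl.
  by case: Hn; exists x; split; apply: pdvd_trans (pdvd_cat [:: x] u') _.
Qed.

(** * The Garside element *)

Definition desc k : seq nat := rev (iota 0 k.+1).
Definition delta_seq N : seq nat := flatten [seq desc k | k <- iota 0 N].

Definition bounded N (m : seq nat) := all (fun i => i < N)%N m.

Lemma pbeq_bounded N u v : pbeq u v -> bounded N u = bounded N v.
Proof. exact: pbeq_all. Qed.

Lemma delta_seqS N : delta_seq N.+1 = delta_seq N ++ desc N.
Proof. by rewrite /delta_seq -addn1 iotaD map_cat flatten_cat /= cats0. Qed.

Lemma descS k : desc k.+1 = k.+1 :: desc k.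
Proof. by rewrite /desc -addn1 iotaD rev_cat. Qed.

Lemma desc_le k : all (fun x => x <= k)%N (desc k).
Proof. by rewrite /desc all_rev; apply/allP=> x; rewrite mem_iota; lia. Qed.

Lemma bounded_delta_seq N : bounded N (delta_seq N).
Proof.
elim: N => // N IH; rewrite /bounded delta_seqS all_cat; apply/andP; split.
- by apply: sub_all IH => x /=; lia.
- by apply: sub_all (desc_le N) => x /=; lia.
Qed.

Lemma desc_shift k i : (i < k)%N -> pbeq (desc k ++ [:: i.+1]) (i :: desc k).
Proof.
elim: k i => // k IH i Hi; rewrite descS /=.
case: (ltnP i k) => Hik.
  by apply: pbeq_trans (pbeq_cons _ (IH i Hik)) (pbeq_swap _ _); rewrite /far; lia.
have -> : i = k by lia.
case: k {IH Hi Hik} => [|k]; first exact: (pbeq_braid [::] (_ : adj 1 0)).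
rewrite descS /=; apply: pbeq_trans (pbeq_cons _ (pbeq_cons _ (pbeq_swap_allr _))) _.
  by apply: sub_all (desc_le k) => x /=; rewrite /far; lia.
by apply: pbeq_braid; rewrite /adj; lia.
Qed.

Lemma iota_shift k i : (i < k)%N -> pbeq (iota 0 k.+1 ++ [:: i]) (i.+1 :: iota 0 k.+1).
Proof.
move/desc_shift/pbeq_rev; rewrite rev_cat /= rev_cons /desc revK -cats1.
exact: pbeq_sym.
Qed.

Lemma delta_seq_iota N : pbeq (delta_seq N.+1) (iota 0 N.+1 ++ delta_seq N).
Proof.
elim: N => [|N IH]; first exact: pbeq_refl.
rewrite delta_seqS; apply: pbeq_trans (pbeq_catr _ IH) _.
have -> : iota 0 N.+2 = iota 0 N.+1 ++ [:: N.+1] by rewrite -addn1 iotaD.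
rewrite -!catA delta_seqS descS; apply: pbeq_catl.
rewrite -cat1s catA [in X in pbeq _ X]catA; apply: pbeq_catr.
by apply: pbeq_swap_allr; apply: sub_all (bounded_delta_seq N) => x /=; rewrite /far; lia.
Qed.

(* Conjugation by Delta is the diagram flip sigma_i |-> sigma_(n-i); with 0-based
   indices and N = n - 1 generators it is i |-> N - 1 - i. *)
Definition flip N i := (N.-1 - i)%N.

Lemma flipK N i : (i < N)%N -> flip N (flip N i) = i.
Proof. rewrite /flip; lia. Qed.

Lemma flip_lt N i : (i < N)%N -> (flip N i < N)%N.
Proof. rewrite /flip; lia. Qed.

Lemma map_flipK N x : bounded N x -> map (flip N) (map (flip N) x) = x.
Proof. by elim: x => //= i x IH /andP [Hi Hx]; rewrite flipK // IH. Qed.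

Lemma bounded_map_flip N x : bounded N x -> bounded N (map (flip N) x).
Proof. by elim: x => //= i x IH /andP [Hi Hx]; rewrite flip_lt // IH. Qed.

Lemma bounded_cat N x y : bounded N (x ++ y) = bounded N x && bounded N y.
Proof. exact: all_cat. Qed.

Lemma delta_seq_letter N i : (i < N)%N -> pbeq (delta_seq N ++ [:: i]) (flip N i :: delta_seq N).
Proof.
rewrite /flip; elim: N i => // N IH [|i] Hi.
- case: N IH Hi => [|N] IH Hi; first exact: pbeq_refl.
  have S1 := pbeq_catr [:: 0] (delta_seq_iota N.+1).
  have S2 := pbeq_catl (iota 0 N.+2) (IH 0 isT).
  have S3 := pbeq_catr (delta_seq N.+1) (iota_shift (ltnSn N)).
  have S4 := pbeq_cons N.+1 (pbeq_sym (delta_seq_iota N.+1)).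
  rewrite -catA in S1; rewrite -catA in S3; rewrite subn0 in S2.
  exact: pbeq_trans S1 (pbeq_trans S2 (pbeq_trans S3 S4)).
- rewrite ltnS in Hi; rewrite delta_seqS -catA.
  apply: pbeq_trans (pbeq_catl _ (desc_shift Hi)) _.
  rewrite -cat1s catA; apply: pbeq_trans (pbeq_catr _ (IH i Hi)) _.
  have -> : (N.+1.-1 - i.+1 = N.-1 - i)%N by lia.
  exact: pbeq_refl.
Qed.

Lemma delta_seq_conj N x : bounded N x ->
  pbeq (delta_seq N ++ x) (map (flip N) x ++ delta_seq N).
Proof.
elim: x => [|i x IH] /=; first by rewrite cats0; move=> _; apply: pbeq_refl.
case/andP=> Hi Hx; rewrite -cat1s catA.
exact: pbeq_trans (pbeq_catr _ (delta_seq_letter Hi)) (pbeq_cons _ (IH Hx)).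
Qed.

Lemma delta_seq_conjV N x : bounded N x ->
  pbeq (delta_seq N ++ map (flip N) x) (x ++ delta_seq N).
Proof. by move=> H; have := delta_seq_conj (bounded_map_flip H); rewrite map_flipK. Qed.

Lemma pbeq_map_flip N u v : pbeq u v -> bounded N u -> pbeq (map (flip N) u) (map (flip N) v).
Proof.
elim=> [u0|u0 v0 H0 IH|u0 v0 w0 H1 IH1 H2 IH2|a b u0 v0 H] Hu.
- exact: pbeq_refl.
- by apply/pbeq_sym/IH; rewrite (pbeq_bounded _ H0).
- by apply: pbeq_trans (IH1 Hu) (IH2 _); rewrite -(pbeq_bounded _ H1).
- rewrite !map_cat; apply: pbeq_cat3.
  move: Hu; rewrite !bounded_cat => /and3P [_ Hu _].
  case: H Hu => [x y Hxy|x] /= /and3P [Hx Hy _].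
  + by apply: pbeq_swap; rewrite /far /flip; lia.
  + by apply: pbeq_braid; rewrite /adj /flip; lia.
Qed.

Lemma delta_seq_flip N : pbeq (delta_seq N) (map (flip N) (delta_seq N)).
Proof. exact/(@pbeq_cancelr (delta_seq N))/delta_seq_conj/bounded_delta_seq. Qed.

Lemma letter_pdvd_delta_seq N i : (i < N)%N -> pdvd [:: i] (delta_seq N).
Proof.
elim: N i => // N IH i Hi; case: (ltnP i N) => Hin.
  by rewrite delta_seqS; apply: pdvd_trans (IH i Hin) (pdvd_cat _ _).
have -> : i = N by lia.
apply: pdvd_pbeqr (pbeq_sym (delta_seq_flip N.+1)) _.
have -> : delta_seq N.+1 = 0 :: behead (delta_seq N.+1) by case: N {IH Hi Hin}.
by rewrite /= /flip subn0; apply: pdvd_cat.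
Qed.

(** * Positive braids embed into the braid group *)

Definition indices n (w : word n) : seq nat := [seq val x.1 | x <- w].
Definition is_posw n (w : word n) := all (fun x => x.2) w.

Lemma bounded_indices n (w : word n) : bounded n.-1 (indices w).
Proof. by rewrite /bounded /indices; apply/allP=> _ /mapP [y _ ->] /=. Qed.

Lemma flatten_nseqS (T : Type) (s : seq T) m :
  flatten (nseq m.+1 s) = flatten (nseq m s) ++ s.
Proof. by rewrite -addn1 nseqD flatten_cat /= cats0. Qed.

Section Embedding.
Variable n : nat.
Local Notation N := n.-1.
Variable A : nat -> seq nat.
Hypothesis letter_compl : forall i, (i < N)%N -> pbeq (i :: A i) (delta_seq N).

Lemma bounded_compl i : (i < N)%N -> bounded N (A i).
Proof.
move=> Hi; have := pbeq_bounded N (letter_compl Hi).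
by rewrite /= Hi bounded_delta_seq.
Qed.

Lemma compl_letter i : (i < N)%N -> pbeq (A i ++ [:: flip N i]) (delta_seq N).
Proof.
move=> Hi; apply: (@pbeq_cons_inj i).
apply: pbeq_trans (pbeq_catr [:: flip N i] (letter_compl Hi)) _.
by have := delta_seq_letter (flip_lt Hi); rewrite flipK.
Qed.

Definition delta_pow k := flatten (nseq k (delta_seq N)).

Lemma delta_powD a b : delta_pow a ++ delta_pow b = delta_pow (a + b).
Proof. by rewrite /delta_pow nseqD flatten_cat. Qed.

Lemma delta_powC a b : delta_pow a ++ delta_pow b = delta_pow b ++ delta_pow a.
Proof. by rewrite !delta_powD addnC. Qed.

Lemma delta_powS k : delta_pow k.+1 = delta_pow k ++ delta_seq N.
Proof. exact: flatten_nseqS. Qed.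

(* A pair [(k, m)] stands for the braid [Delta^-k m]; a negative letter is read
   through [sigma_i^-1 = A_i Delta^-1] and [m Delta^-1 = Delta^-1 (flip m)]. *)
Definition frac := (nat * seq nat)%type.

Definition fstep (s : frac) (x : letter n) : frac :=
  if x.2 then (s.1, s.2 ++ [:: val x.1]) else (s.1.+1, map (flip N) (s.2 ++ A (val x.1))).

Definition frun (s : frac) (w : word n) := foldl fstep s w.

Definition frac_eq (s s' : frac) := pbeq (delta_pow s'.1 ++ s.2) (delta_pow s.1 ++ s'.2).

Lemma frac_eq_trans s s' s'' : frac_eq s s' -> frac_eq s' s'' -> frac_eq s s''.
Proof.
case: s s' s'' => [k m] [k' m'] [k'' m'']; rewrite /frac_eq /= => H1 H2.
apply: (@pbeq_cancell (delta_pow k')).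
rewrite !catA [delta_pow k' ++ delta_pow k'']delta_powC -catA.
apply: pbeq_trans (pbeq_catl _ H1) _.
rewrite !catA [delta_pow k'' ++ delta_pow k]delta_powC -!catA.
apply: pbeq_trans (pbeq_catl _ H2) _.
by rewrite !catA [delta_pow k ++ delta_pow k']delta_powC; apply: pbeq_refl.
Qed.

Lemma bounded_fstep s x : bounded N s.2 -> bounded N (fstep s x).2.
Proof.
case: s x => k m [i []] /= Hm; first by rewrite bounded_cat Hm /= ltn_ord.
by apply: bounded_map_flip; rewrite bounded_cat Hm bounded_compl.
Qed.

Lemma bounded_frun s w : bounded N s.2 -> bounded N (frun s w).2.
Proof. by elim: w s => //= x w IH s Hs; apply/IH/bounded_fstep. Qed.

Lemma fstep_frac_eq s s' x : bounded N s.2 -> bounded N s'.2 -> frac_eq s s' ->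
  frac_eq (fstep s x) (fstep s' x).
Proof.
case: s s' x => [k m] [k' m'] [i []] /= Hm Hm'; rewrite /frac_eq /fstep /= => H.
  by rewrite !catA; apply: pbeq_catr.
have Vm : bounded N (m ++ A i) by rewrite bounded_cat Hm bounded_compl.
have Vm' : bounded N (m' ++ A i) by rewrite bounded_cat Hm' bounded_compl.
rewrite !delta_powS -!catA.
apply: pbeq_trans (pbeq_catl _ (delta_seq_conjV Vm)) _.
apply: pbeq_trans _ (pbeq_catl _ (pbeq_sym (delta_seq_conjV Vm'))).
by rewrite !catA; apply/pbeq_catr/pbeq_catr.
Qed.

Lemma frun_frac_eq s s' w : bounded N s.2 -> bounded N s'.2 -> frac_eq s s' ->
  frac_eq (frun s w) (frun s' w).
Proof.
elim: w s s' => //= x w IH s s' Hs Hs' H.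
by apply: IH; rewrite ?bounded_fstep //; apply: fstep_frac_eq.
Qed.

Lemma frun_pos s w : is_posw w -> frun s w = (s.1, s.2 ++ indices w).
Proof.
elim: w s => [|[i b] w IH] [k m] /=; first by rewrite cats0.
by case: b => //= Hw; rewrite IH //= -catA.
Qed.

Lemma frun_free s i e : bounded N s.2 -> frac_eq (frun s [:: (i, e); (i, ~~ e)]) s.
Proof.
case: s => k m /= Hm; have Hi := ltn_ord i.
have Vmi : bounded N (m ++ A i) by rewrite bounded_cat Hm bounded_compl.
have back p : pbeq p (m ++ delta_seq N) -> bounded N p ->
    pbeq (map (flip N) p) (delta_seq N ++ m).
  move=> Hp Vp; apply: pbeq_trans (pbeq_map_flip Hp Vp) _.
  rewrite map_cat; apply: pbeq_trans (pbeq_catl _ (pbeq_sym (delta_seq_flip N))) _.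
  exact: pbeq_sym (delta_seq_conj Hm).
rewrite /frac_eq; case: e => /=; rewrite delta_powS -(catA (delta_pow k)).
- apply/pbeq_catl/back; last by rewrite !bounded_cat Hm /= Hi bounded_compl.
  by rewrite -catA; apply/pbeq_catl/letter_compl.
- have -> : map (flip N) (m ++ A i) ++ [:: val i] = map (flip N) (m ++ A i ++ [:: flip N i]).
    by rewrite !map_cat /= flipK // catA.
  apply/pbeq_catl/back; last by rewrite catA bounded_cat Vmi /= flip_lt.
  exact/pbeq_catl/compl_letter.
Qed.

Lemma frun_pbrel s u v : is_posw u -> is_posw v -> pbrel (indices u) (indices v) ->
  frac_eq (frun s u) (frun s v).
Proof.
case: s => k m Hu Hv H; rewrite !frun_pos //= /frac_eq /= !catA.
exact/pbeq_catl/pbeq_rel.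
Qed.

Lemma frun_breq u v : breq u v -> forall s, bounded N s.2 -> frac_eq (frun s u) (frun s v).
Proof.
elim=> [u0|u0 v0 _ IH|u0 v0 w0 _ IH1 _ IH2|a b u0 v0 H] s Hs.
- exact: pbeq_refl.
- exact: pbeq_sym (IH s Hs).
- exact: frac_eq_trans (IH1 s Hs) (IH2 s Hs).
rewrite /frun !foldl_cat -!/(frun _ _).
have Va := bounded_frun a Hs.
apply: frun_frac_eq; rewrite ?bounded_frun //.
case: H => [i e|i j Hij|i j Hij]; first exact: frun_free.
- by apply: frun_pbrel => //; apply: pbrel_comm.
- by apply: frun_pbrel => //; rewrite /indices /= -Hij; apply: pbrel_braid.
Qed.

End Embedding.

Theorem breq_pbeq n (u v : word n) : is_posw u -> is_posw v -> breq u v ->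
  pbeq (indices u) (indices v).
Proof.
move=> Hu Hv H.
pose compl i c := (i < n.-1)%N -> pbeq (i :: c) (delta_seq n.-1).
have [A HA] : exists A, forall i, compl i (A i).
  apply: functional_choice => i; case: (ltnP i n.-1) => Hi.
  - by case: (letter_pdvd_delta_seq Hi) => c Hc; exists c.
  - by exists [::] => H'; move: H' Hi; lia.
by have := frun_breq HA H (s := (0, [::])) isT; rewrite !frun_pos // /frac_eq.
Qed.

Section BraidWords.
Variable n : nat.
Local Notation N := n.-1.
Implicit Types a b u v w x y : word n.

Lemma breq_cat3 a b u v : breq u v -> breq (a ++ u ++ b) (a ++ v ++ b).
Proof.
elim=> [u0|u0 v0 _|u0 v0 w0 _ IH1 _ IH2|a0 b0 u0 v0 H].
- exact: breq_refl.
- exact: breq_sym.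
- exact: breq_trans IH1 IH2.
- have := breq_ctx (a ++ a0) (b0 ++ b) H.
  by rewrite !catA -!(catA _ _ b0) -!(catA _ _ b).
Qed.

Lemma breq_catl a u v : breq u v -> breq (a ++ u) (a ++ v).
Proof. by move=> H; have := breq_cat3 a [::] H; rewrite !cats0. Qed.

Lemma breq_catr b u v : breq u v -> breq (u ++ b) (v ++ b).
Proof. exact: (@breq_cat3 [::] b u v). Qed.

Lemma breq_cat u u' v v' : breq u u' -> breq v v' -> breq (u ++ v) (u' ++ v').
Proof. by move=> H1 H2; apply: breq_trans (breq_catr v H1) (breq_catl u' H2). Qed.

Lemma winv_cat u v : winv (u ++ v) = winv v ++ winv u.
Proof. by rewrite /winv map_cat rev_cat. Qed.

Lemma winvK : involutive (@winv n).
Proof.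
move=> w; rewrite /winv map_rev revK -map_comp map_id_in // => -[i b] _ /=.
by rewrite negbK.
Qed.

Lemma breq_catV w : breq (w ++ winv w) [::].
Proof.
elim: w => [|x w IH] /=; first exact: breq_refl.
rewrite /winv /= rev_cons -/(winv w) -cats1 catA.
apply: breq_trans (breq_cat3 [:: x] [:: (x.1, ~~ x.2)] IH) _.
by case: x => i b; have := breq_ctx [::] [::] (brel_free i b).
Qed.

Lemma breq_Vcat w : breq (winv w ++ w) [::].
Proof. by have := breq_catV (winv w); rewrite winvK. Qed.

Lemma breq_cancell a u v : breq (a ++ u) (a ++ v) -> breq u v.
Proof.
move=> H.
have H1 := breq_catr u (breq_Vcat a); rewrite -catA /= in H1.
have H2 := breq_catr v (breq_Vcat a); rewrite -catA /= in H2.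
exact: breq_trans (breq_sym H1) (breq_trans (breq_catl _ H) H2).
Qed.

Lemma breq_winv a a' : breq a a' -> breq (winv a) (winv a').
Proof.
move=> H; apply: (@breq_cancell a); apply: breq_trans (breq_catV a) _.
apply: breq_sym; apply: breq_trans (breq_catr _ H) (breq_catV a').
Qed.

Lemma breq_wpowz_posneg w k l :
  breq (flatten (nseq k w) ++ flatten (nseq l (winv w))) (wpowz w (k%:Z - l%:Z)).
Proof.
elim: l k => [|l IH] k; first by rewrite subr0 cats0; apply: breq_refl.
case: k => [|k].
  have -> : (0%:Z - l.+1%:Z = Negz l)%R by rewrite NegzE; lia.
  exact: breq_refl.
have -> : (k.+1%:Z - l.+1%:Z = k%:Z - l%:Z)%R by lia.
apply: breq_trans (IH k); rewrite flatten_nseqS /= -catA; apply: breq_catl.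
by rewrite catA; have := breq_catr (flatten (nseq l (winv w))) (breq_catV w).
Qed.

Lemma breq_wpowz_negpos w k l :
  breq (flatten (nseq l (winv w)) ++ flatten (nseq k w)) (wpowz w (k%:Z - l%:Z)).
Proof.
elim: l k => [|l IH] k; first by rewrite subr0; apply: breq_refl.
case: k => [|k].
  have -> : (0%:Z - l.+1%:Z = Negz l)%R by rewrite NegzE; lia.
  by rewrite cats0; apply: breq_refl.
have -> : (k.+1%:Z - l.+1%:Z = k%:Z - l%:Z)%R by lia.
apply: breq_trans (IH k); rewrite flatten_nseqS /= -catA; apply: breq_catl.
by rewrite catA; have := breq_catr (flatten (nseq k w)) (breq_Vcat w).
Qed.

Lemma wpowzD w (z1 z2 : int) : breq (wpowz w z1 ++ wpowz w z2) (wpowz w (z1 + z2)).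
Proof.
case: z1 => k; case: z2 => l /=.
- by rewrite -flatten_cat -nseqD; apply: breq_refl.
- by rewrite NegzE; apply: (breq_wpowz_posneg w k l.+1).
- by rewrite NegzE addrC; apply: (breq_wpowz_negpos w l k.+1).
- rewrite -catA [flatten _ ++ _]catA -flatten_nseqS /= -catA -flatten_cat -nseqD.
  exact: breq_refl.
Qed.

Definition pword (m : seq nat) : word n :=
  [seq (i, true) | i <- pmap (@insub nat (fun k => k < N)%N 'I_N) m].

Lemma Delta_pword : Delta n = pword (delta_seq N).
Proof. by []. Qed.

Lemma pword_cat m m' : pword (m ++ m') = pword m ++ pword m'.
Proof. by rewrite /pword pmap_cat map_cat. Qed.

Lemma is_posw_pword m : is_posw (pword m).
Proof. by apply/allP=> x /mapP [y _ ->]. Qed.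

Lemma indices_pword m : bounded N m -> indices (pword m) = m.
Proof. by elim: m => //= x m IH /andP [Hx Hm]; rewrite /pword /= insubT /= -/(pword m) IH. Qed.

Lemma pword_indices w : is_posw w -> pword (indices w) = w.
Proof.
elim: w => //= -[i b] w IH /andP [/= Hb Hw]; case: b Hb => // _.
rewrite /pword /= (insubT (fun k => k < N)%N (ltn_ord i)) /= -/(pword _) IH //.
by congr ((_, true) :: w); apply: val_inj.
Qed.

Lemma pbeq_breq m m' : pbeq m m' -> bounded N m -> breq (pword m) (pword m').
Proof.
elim=> [u0|u0 v0 H0 IH|u0 v0 w0 H1 IH1 H2 IH2|a b u0 v0 H] Hm.
- exact: breq_refl.
- by apply/breq_sym/IH; rewrite (pbeq_bounded _ H0).
- by apply: breq_trans (IH1 Hm) (IH2 _); rewrite -(pbeq_bounded _ H1).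
rewrite !pword_cat; apply: breq_cat3.
move: Hm; rewrite !bounded_cat => /and3P [_ + _].
case: H => [x y Hxy|x] /= /and3P [Hx Hy _];
  rewrite /pword /= (insubT (fun k => k < N)%N Hx) (insubT (fun k => k < N)%N Hy) /=.
- exact: (breq_ctx [::] [::] (brel_comm (i := Ordinal Hx) (j := Ordinal Hy) Hxy)).
- exact: (breq_ctx [::] [::] (brel_braid (i := Ordinal Hx) (j := Ordinal Hy) erefl)).
Qed.

Lemma breq_pword m m' : bounded N m -> bounded N m' ->
  breq (pword m) (pword m') -> pbeq m m'.
Proof.
by move=> Hm Hm' /(breq_pbeq (is_posw_pword m) (is_posw_pword m')); rewrite !indices_pword.
Qed.

Lemma is_pos_breq x y : breq x y -> is_pos x -> is_pos y.
Proof. by move=> H [p [Hp Hxp]]; exists p; split=> //; apply: breq_trans (breq_sym H) Hxp. Qed.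

Lemma is_pos_pword m : is_pos (pword m).
Proof. by exists (pword m); split; [apply: is_posw_pword | apply: breq_refl]. Qed.

Lemma is_posP x : is_pos x -> exists2 m, bounded N m & breq x (pword m).
Proof.
move=> [p [Hp Hxp]]; exists (indices p); first exact: bounded_indices.
by rewrite pword_indices.
Qed.

Lemma is_pos_nil : is_pos ([::] : word n).
Proof. exact: is_pos_pword [::]. Qed.

Lemma is_pos_cat x y : is_pos x -> is_pos y -> is_pos (x ++ y).
Proof.
move=> [p [Hp Hx]] [q [Hq Hy]]; exists (p ++ q); split; last exact: breq_cat.
by rewrite /is_posw all_cat Hp.
Qed.

Lemma is_posw_breq_nil (p : word n) : is_posw p -> breq p [::] -> p = [::].
Proof.
move=> Hp /(breq_pbeq Hp (isT : is_posw ([::] : word n))) /pbeq_size.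
by rewrite size_map; case: p {Hp}.
Qed.

Definition bprec x y := is_pos (winv x ++ y).

Lemma bprec_breql x x' y : breq x x' -> bprec x y -> bprec x' y.
Proof. by move=> H; apply/is_pos_breq/breq_catr/breq_winv. Qed.

Lemma bprec_breqr x y y' : breq y y' -> bprec x y -> bprec x y'.
Proof. by move=> H; apply/is_pos_breq/breq_catl. Qed.

Lemma bprec_trans x y w : bprec x y -> bprec y w -> bprec x w.
Proof.
move=> H1 H2; apply: is_pos_breq (is_pos_cat H1 H2).
rewrite -catA; apply: breq_catl; rewrite catA.
by have := breq_catr w (breq_catV y).
Qed.

Lemma bprec_winvl x y w : bprec (winv x ++ y) w = bprec y (x ++ w).
Proof. by rewrite /bprec winv_cat winvK -catA. Qed.

Lemma bprec_cat x y : is_pos y -> bprec x (x ++ y).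
Proof.
apply: is_pos_breq; rewrite catA; apply: breq_sym.
by have := breq_catr y (breq_Vcat x).
Qed.

Lemma bprec_pos x y : bprec x y -> exists2 q, is_pos q & breq (x ++ q) y.
Proof.
move=> H; exists (winv x ++ y) => //; rewrite catA.
by have := breq_catr y (breq_catV x).
Qed.

Lemma prec_bprec x y : prec x y <-> [/\ is_pos x, is_pos y & bprec x y].
Proof.
split=> [[Hx [Hy [c [Hc Hxc]]]] | [Hx Hy /bprec_pos [c Hc Hxc]]]; last first.
  by do 2!split=> //; exists c.
split=> //; apply: is_pos_breq Hc; apply: breq_sym.
apply: breq_trans (breq_catl _ (breq_sym Hxc)) _.
by rewrite catA; have := breq_catr c (breq_Vcat x).
Qed.

Lemma bprec_pword m m' : bounded N m -> bounded N m' ->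
  bprec (pword m) (pword m') -> pdvd m m'.
Proof.
move=> Hm Hm' /is_posP [c Hc H]; exists c; apply: pbeq_sym; apply: breq_pword => //.
  by rewrite bounded_cat Hm.
rewrite pword_cat; apply: (@breq_cancell (winv (pword m))); apply: breq_trans H _.
by rewrite catA; apply: breq_sym; have := breq_catr (pword c) (breq_Vcat (pword m)).
Qed.

Lemma pdvd_pword m m' : bounded N m' -> pdvd m m' -> bprec (pword m) (pword m').
Proof.
move=> Hm' [c Hc]; have := pbeq_bounded N Hc.
rewrite Hm' bounded_cat => /andP [Hm Vc].
apply: is_pos_breq (is_pos_pword c); rewrite -[pword c]/([::] ++ pword c).
apply: breq_trans (breq_catr _ (breq_sym (breq_Vcat (pword m)))) _.
by rewrite -catA -pword_cat; apply/breq_catl/pbeq_breq; rewrite // bounded_cat Hm Vc.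
Qed.

Definition is_bgcd g x y := [/\ is_pos g, bprec g x, bprec g y &
  forall u, is_pos u -> bprec u x -> bprec u y -> bprec u g].

Lemma bgcd_exists x y : is_pos x -> is_pos y -> exists g, is_bgcd g x y.
Proof.
move=> /is_posP [m1 V1 Hx] /is_posP [m2 V2 Hy].
have [g [Hg1 Hg2 HgU]] := pgcd_exists m1 m2.
have [c Hc] := Hg1; have Vg : bounded N g.
  by move: (pbeq_bounded N Hc); rewrite V1 bounded_cat => /andP [].
exists (pword g); split; first exact: is_pos_pword.
- exact: bprec_breqr (breq_sym Hx) (pdvd_pword V1 Hg1).
- exact: bprec_breqr (breq_sym Hy) (pdvd_pword V2 Hg2).
move=> u /is_posP [mu Vu Hu] H1 H2; apply: bprec_breql (breq_sym Hu) _.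
apply/(pdvd_pword Vg)/HgU; apply: bprec_pword => //.
- exact: bprec_breql Hu (bprec_breqr Hx H1).
- exact: bprec_breql Hu (bprec_breqr Hy H2).
Qed.

(** * Conjugation by powers of the Garside element *)

Definition conj_by e x := e ++ x ++ winv e.

Lemma is_pos_conj_Delta x : is_pos x -> is_pos (conj_by (Delta n) x).
Proof.
move=> /is_posP [m Vm Hx].
have V : bounded N (delta_seq N ++ m) by rewrite bounded_cat bounded_delta_seq.
have := pbeq_breq (delta_seq_conj Vm) V; rewrite !pword_cat -Delta_pword => H.
apply: is_pos_breq (is_pos_pword (map (flip N) m)).
apply: breq_sym; apply: breq_trans (breq_catl _ (breq_catr _ Hx)) _.
rewrite catA; apply: breq_trans (breq_catr _ H) _; rewrite -catA.
by have := breq_catl (pword (map (flip N) m)) (breq_catV (Delta n)); rewrite cats0.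
Qed.

Lemma is_pos_conjV_Delta x : is_pos x -> is_pos (conj_by (winv (Delta n)) x).
Proof.
move=> /is_posP [m Vm Hx]; rewrite /conj_by winvK.
have V : bounded N (delta_seq N ++ map (flip N) m).
  by rewrite bounded_cat bounded_delta_seq bounded_map_flip.
have := pbeq_breq (delta_seq_conjV Vm) V; rewrite !pword_cat -Delta_pword => H.
apply: is_pos_breq (is_pos_pword (map (flip N) m)).
apply: breq_sym; apply: breq_trans (breq_catl _ (breq_catr _ Hx)) _.
apply: breq_trans (breq_catl _ (breq_sym H)) _; rewrite catA.
by have := breq_catr (pword (map (flip N) m)) (breq_Vcat (Delta n)).
Qed.

Lemma is_pos_conj_nseq e k : (forall x, is_pos x -> is_pos (conj_by e x)) ->
  forall x, is_pos x -> is_pos (conj_by (flatten (nseq k e)) x).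
Proof.
move=> He; elim: k => [|k IH] x Hx /=; first by rewrite /conj_by cats0.
by have := He _ (IH x Hx); rewrite /conj_by winv_cat -!catA.
Qed.

Lemma is_pos_conj_Delta_pow (z : int) x : is_pos x -> is_pos (conj_by (wpowz (Delta n) z) x).
Proof.
case: z => k; first exact/is_pos_conj_nseq/is_pos_conj_Delta.
exact/is_pos_conj_nseq/is_pos_conjV_Delta.
Qed.

Lemma bprec_conj_Delta_pow (z : int) x y : bprec x y ->
  bprec (conj_by (wpowz (Delta n) z) x) (conj_by (wpowz (Delta n) z) y).
Proof.
set E := wpowz (Delta n) z; move/(is_pos_conj_Delta_pow z); apply: is_pos_breq.
rewrite /conj_by !winv_cat winvK -!catA; apply/breq_catl/breq_catl.
by apply: breq_sym; have := breq_catr (y ++ winv E) (breq_Vcat E); rewrite -catA.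
Qed.

Lemma is_pos_Delta_pow k : is_pos (wpowz (Delta n) k%:Z).
Proof.
elim: k => [|k IH] /=; first exact: is_pos_nil.
by apply: is_pos_cat IH; rewrite Delta_pword; apply: is_pos_pword.
Qed.

Lemma inf_geE (j : int) x : inf_ge j x <-> is_pos (wpowz (Delta n) (- j) ++ x).
Proof.
split=> [[k [Hjk [p [Hp Hx]]]] | H].
  apply: is_pos_breq (breq_catl _ (breq_sym Hx)) _; rewrite catA.
  apply: is_pos_breq (breq_catr _ (breq_sym (wpowzD _ _ _))) (is_pos_cat _ Hp).
  have [m ->] : exists m, (- j + k = m%:Z)%R.
    by case E: (- j + k)%R => [m|m]; [exists m | move: E Hjk; rewrite NegzE; lia].
  exact: is_pos_Delta_pow.
exists j; split=> //; exists (wpowz (Delta n) (- j) ++ x); split=> //.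
rewrite catA; apply: breq_trans (breq_catr _ (breq_sym (wpowzD _ _ _))).
by rewrite subrr; apply: breq_refl.
Qed.

End BraidWords.

(** * Minimal simple conjugators *)

Section MinimalConjugators.
Variable n : nat.
Implicit Types s g x y : word n.

Lemma is_pos_conjw E y s :
  is_pos (E ++ conjw s y) <-> bprec (conj_by E s) ((E ++ y) ++ s).
Proof.
have H : breq (winv (conj_by E s) ++ (E ++ y) ++ s) (E ++ conjw s y).
  rewrite /conj_by /conjw !winv_cat winvK -!catA; apply/breq_catl/breq_catl.
  by have := breq_catr (y ++ s) (breq_Vcat E); rewrite -catA.
by split; apply: is_pos_breq; [apply: breq_sym|].
Qed.

(* With p = Delta^z y and phi the conjugation by Delta^z, each hypothesis reads
   phi(s) <= p s; the gcd h of p s1 and p s2 then satisfies phi(g) <= h <= p g. *)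
Lemma is_pos_conjw_bgcd (z : int) y g s1 s2 : is_pos s1 -> is_pos s2 ->
  is_bgcd g s1 s2 -> is_pos (wpowz (Delta n) z ++ y) ->
  is_pos (wpowz (Delta n) z ++ conjw s1 y) -> is_pos (wpowz (Delta n) z ++ conjw s2 y) ->
  is_pos (wpowz (Delta n) z ++ conjw g y).
Proof.
move=> Ps1 Ps2 [Pg Hg1 Hg2 HgU] Pp /is_pos_conjw Hs1 /is_pos_conjw Hs2.
apply/is_pos_conjw; set p := _ ++ y in Pp Hs1 Hs2 *.
have [h [Ph Hh1 Hh2 HhU]] := bgcd_exists (is_pos_cat Pp Ps1) (is_pos_cat Pp Ps2).
have Hgh : bprec (conj_by (wpowz (Delta n) z) g) h.
  apply: HhU; first exact: is_pos_conj_Delta_pow.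
  - exact: bprec_trans (bprec_conj_Delta_pow z Hg1) Hs1.
  - exact: bprec_trans (bprec_conj_Delta_pow z Hg2) Hs2.
have Hph : bprec p h by apply: HhU; [| exact: bprec_cat | exact: bprec_cat].
have Hhg : bprec h (p ++ g) by rewrite -bprec_winvl; apply: HgU; rewrite ?bprec_winvl.
exact: bprec_trans Hgh Hhg.
Qed.

Variables (r : nat) (J : 'I_r -> int) (d : 'I_r -> word n).

Lemma candS_bgcd s s' g : inC J d -> candS J d s -> candS J d s' ->
  is_bgcd g s s' -> ~ breq g [::] -> candS J d g.
Proof.
move=> Hd [[Ps Hs] [_ Cs]] [[Ps' _] [_ Cs']] Hg Hg0; case: (Hg) => Pg Hgs _ _.
split; last split=> // k.
  split=> //; apply/prec_bprec; case/prec_bprec: Hs => _ PD HsD.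
  by split=> //; apply: bprec_trans Hgs HsD.
apply/inf_geE; apply: is_pos_conjw_bgcd Ps Ps' Hg _ _ _; apply/inf_geE.
- exact: Hd.
- exact: Cs.
- exact: Cs'.
Qed.

Lemma is_pos_first_letter s : is_pos s -> ~ breq s [::] ->
  exists i : 'I_n.-1, bprec [:: (i, true)] s.
Proof.
case=> -[|[i b] p] [/= Hp Hsp] Hs; first by case: Hs.
case/andP: Hp => /= Hb Hp; rewrite Hb in Hsp; exists i.
apply: (bprec_breqr (breq_sym Hsp)); apply: (@bprec_cat _ [:: (i, true)]).
by exists p; split=> //; apply: breq_refl.
Qed.

Lemma letter_not_bprec_nil (i : 'I_n.-1) : ~ bprec [:: (i, true)] ([::] : word n).
Proof.
case=> p [Hp /= Hip].
have : breq ((i, true) :: p) [::].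
  by apply: breq_trans (breq_catl [:: (i, true)] (breq_sym Hip)) (breq_catV _).
by move/is_posw_breq_nil; rewrite /is_posw /= Hp => /(_ isT).
Qed.

Lemma inS_letter_eq s s' (i : 'I_n.-1) : inC J d -> inS J d s -> inS J d s' ->
  bprec [:: (i, true)] s -> bprec [:: (i, true)] s' -> breq s s'.
Proof.
move=> Hd [Cs Ms] [Cs' Ms'] His His'.
have [[Ps _] _] := Cs; have [[Ps' _] _] := Cs'.
have [g Hg] := bgcd_exists Ps Ps'; case: (Hg) => Pg Hgs Hgs' HgU.
have Hig : bprec [:: (i, true)] g.
  by apply: HgU => //; exists [:: (i, true)]; split=> //; apply: breq_refl.
have Cg : candS J d g.
  apply: (candS_bgcd Hd Cs Cs' Hg) => Hg0.
  exact: (letter_not_bprec_nil (bprec_breqr Hg0 Hig)).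
have E := Ms g Cg (iffRL (prec_bprec g s) (And3 Pg Ps Hgs)).
have E' := Ms' g Cg (iffRL (prec_bprec g s') (And3 Pg Ps' Hgs')).
exact: breq_trans (breq_sym E) E'.
Qed.

End MinimalConjugators.

Theorem corollary3p3 (n r : nat) (J : 'I_r -> int) (d : 'I_r -> word n) :
  inC J d ->
  forall ss : seq (word n),
    (forall s, s \in ss -> inS J d s) ->
    (forall i j, (i < size ss)%N -> (j < size ss)%N -> i <> j ->
       ~ breq (nth [::] ss i) (nth [::] ss j)) ->
    (size ss <= n.-1)%N.
Proof.
move=> Hd ss Hin Hdist.
have inS_nth (k : 'I_(size ss)) : inS J d (nth [::] ss k) by apply/Hin/mem_nth.
pose first_letter (k : 'I_(size ss)) (i : 'I_n.-1) := bprec [:: (i, true)] (nth [::] ss k).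
have [f Hf] : exists f, forall k, first_letter k (f k).
  apply: functional_choice => k; have [[[Ps _] [Hs _]] _] := inS_nth k.
  exact: is_pos_first_letter.
have f_inj : injective f.
  move=> k1 k2 E; apply/val_inj/eqP/negPn/negP => /eqP ne.
  apply: (Hdist k1 k2 (ltn_ord k1) (ltn_ord k2) ne).
  by apply: inS_letter_eq Hd (inS_nth k1) (inS_nth k2) (Hf k1) _; rewrite E; apply: Hf.
by have := leq_card f f_inj; rewrite !card_ord.
Qed.
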